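(* Let $q\ge 3$ be a prime power and $n\ge 2d\ge 2$. For all $0\le i\le d-1$ and $1\le j\le d$, $$|G_j(i+1)|<|G_j(i)|.$$
   Context: For integers $m\ge 0$ and $l$, ${m\brack l}=\prod_{t=1}^{l}\frac{q^{m-t+1}-1}{q^t-1}$ for $l\ge0$ and $0$ for $l<0$. For $0\le i,j\le d$, $$G_j(i)=\sum_{h=\max\{0,i-j\}}^{\min\{i,d-j\}}(-1)^{i-h}q^{j(j-i+h)+\binom{i-h}{2}}{i\brack h}{d-h\brack j}{n-d-i+h\brack n-d-j};$$ $G_j(i)$ ($0\le i\le d$) are the eigenvalues of the Grassmann graph $G_q(n,d,j)$, whose vertices are the $d$-dimensional subspaces of $\mathbb F_q^n$, two being adjacent iff their intersection has dimension $d-j$. *)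

From mathcomp Require Import all_boot all_order all_algebra.
Set Implicit Arguments. Unset Strict Implicit. Unset Printing Implicit Defensive.
Import Order.TTheory GRing.Theory Num.Theory.
Local Open Scope ring_scope.

(* The exponent
   m+1-t is truncated in nat; this only matters when t > m+1, in which case
   the factor t = m+1 (exponent 0) already makes the product 0, as in the
   informal formula. *)
Definition gauss (q : nat) (m l : nat) : rat :=
  \prod_(1 <= t < l.+1) (((q%:R : rat) ^+ (m.+1 - t)%N - 1) / ((q%:R : rat) ^+ t - 1)).

(* Eigenvalue G_j(i) of the Grassmann graph G_q(n,d,j).
   The sum runs over h from max{0,i-j} = (i-j)%N (truncated) to min{i,d-j}.
   On this range h >= i-j so j-i+h = (j+h-i)%N, and n-d-i+h >= 0 because
   i <= d <= n-d in the intended range. *)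
Definition G (q n d j i : nat) : rat :=
  \sum_((i - j)%N <= h < (minn i (d - j)).+1)
    (-1) ^+ (i - h)%N * (q%:R : rat) ^+ (j * (j + h - i) + 'C(i - h, 2))%N
    * gauss q i h * gauss q (d - h) j * gauss q (n - d - i + h) (n - d - j).

From mathcomp Require Import all_boot all_order all_algebra.
From mathcomp Require Import zify ring lra.
Import Order.TTheory GRing.Theory Num.Theory.
Local Open Scope ring_scope.

(* Write G_j(I) = sum_{h = lo}^{top} (-1)^(I-h) t_I(h), where t_I(h) >= 0 is
   the absolute value of the h-th summand, lo = max(0, I-j), top = min(I, d-j).
   - Gaussian binomials are positive and satisfy the two Pascal-type
     recurrences gaussSl, gaussSm; these are the only facts about them we use.
   - For q >= 3 and n >= 2d the summands grow with h (term_mono): the ratio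
     t_I(h+1)/t_I(h) is computed from the recurrences and bounded below by 1
     through an elementary inequality (term_ratio_ineq, term_step_le).
   - An alternating sum of a nonnegative nondecreasing sequence lies between
     its last increment and its last term (alt_sum_bounds); hence
     t_I(top) - t_I(top-1) <= |G_j(I)| <= t_I(top)   (G_bounds).
   - The top summands satisfy t_{i+1}(top) + t_i(top-1) < t_i(top), in the
     regimes i + j < d (top = i, lead_gap_low) and i + j >= d (top = d - j,
     lead_gap_high); again the recurrences reduce this to inequalities in an
     ordered field (lead_gap_low_ineq, lead_gap_high_ineq).
   Chaining |G_j(i+1)| <= t_{i+1}(top) < t_i(top) - t_i(top-1) <= |G_j(i)| gives
   the theorem. *)

Section GaussianBinomial.

Variable q : nat.
Hypothesis q_gt1 : (1 < q)%N.

Local Notation Q := (q%:R : rat).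

Let Q_gt1 : 1 < Q. Proof. by rewrite ltr1n. Qed.

Lemma Qpow_sub1_gt0 {k} : (0 < k)%N -> 0 < Q ^+ k - 1.
Proof. by move=> k_gt0; rewrite subr_gt0 exprn_egt1 // -lt0n. Qed.

Lemma Qpow_sub1_neq0 {k} : (0 < k)%N -> Q ^+ k - 1 != 0.
Proof. by move=> k_gt0; rewrite gt_eqF // (Qpow_sub1_gt0 k_gt0). Qed.

Lemma gauss0 m : gauss q m 0 = 1.
Proof. by rewrite /gauss big_geq. Qed.

Lemma gauss_ge0 m l : 0 <= gauss q m l.
Proof.
apply: prodr_ge0 => t _.
by apply: divr_ge0; rewrite subr_ge0 exprn_ege1 // ler1n ltnW.
Qed.

Lemma gaussSl m l : gauss q m l.+1 * (Q ^+ l.+1 - 1) = gauss q m l * (Q ^+ (m - l) - 1).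
Proof. by rewrite /gauss big_nat_recr //= subSS -mulrA mulfVK // (Qpow_sub1_neq0 (ltn0Sn l)). Qed.

Lemma gauss_gt0 m l : (l <= m)%N -> 0 < gauss q m l.
Proof.
elim: l => [|l IHl] lm; first by rewrite gauss0.
have rhs_gt0 : 0 < gauss q m l * (Q ^+ (m - l) - 1).
  by rewrite mulr_gt0 ?IHl ?(ltnW lm) // Qpow_sub1_gt0 // subn_gt0.
by move: rhs_gt0; rewrite -gaussSl pmulr_lgt0 // (Qpow_sub1_gt0 (ltn0Sn l)).
Qed.

Lemma gaussSm m l : (l <= m)%N ->
  gauss q m.+1 l * (Q ^+ (m.+1 - l) - 1) = gauss q m l * (Q ^+ m.+1 - 1).
Proof.
elim: l => [|l IHl] lm; first by rewrite !gauss0 subn0.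
apply: (mulIf (Qpow_sub1_neq0 (ltn0Sn l))).
rewrite mulrAC gaussSl -mulrA [_ * (_ ^+ _ - 1)]mulrC mulrA subSS.
by rewrite mulrAC (IHl (ltnW lm)) [RHS]mulrAC gaussSl mulrAC.
Qed.

Lemma gauss_nn m : gauss q m m = 1.
Proof.
elim: m => [|m IHm]; first exact: gauss0.
apply: (mulIf (Qpow_sub1_neq0 (ltn0Sn m))); rewrite mul1r gaussSl.
by have := gaussSm m m (leqnn m); rewrite IHm mul1r subSn // subnn.
Qed.

Lemma gauss_Sn m : gauss q m.+1 m = (Q ^+ m.+1 - 1) / (Q - 1).
Proof.
have := gaussSm m m (leqnn m); rewrite gauss_nn mul1r subSn // subnn expr1 => <-.
by rewrite mulfK // subr_eq0 gt_eqF.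
Qed.

End GaussianBinomial.

Section OrderedFieldFacts.

Context {R : realFieldType}.

Lemma alt_sum_bounds (f : nat -> R) (lo m : nat) :
  0 <= f lo -> (forall h, (lo <= h < lo + m)%N -> f h <= f h.+1) ->
  let T := \sum_(lo <= h < (lo + m).+1) (-1) ^+ (lo + m - h) * f h in
  0 <= T <= f (lo + m)%N /\ ((0 < m)%N -> f (lo + m)%N - f (lo + m).-1 <= T).
Proof.
move=> f0; elim: m => [|m IHm] f_mono /=.
  by rewrite addn0 big_nat1 subnn expr0 mul1r f0 lexx.
have [/andP[T_ge0 T_le] _] := IHm (fun h hh => f_mono h ltac:(lia)).
have f_step := f_mono (lo + m)%N ltac:(lia).
rewrite addnS big_nat_recr /=; last lia.
rewrite subnn expr0 mul1r.
rewrite (eq_big_nat _ _ (F2 := fun h => - ((-1) ^+ (lo + m - h) * f h))); last first.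
  by move=> h /andP[_ hm]; rewrite subSn // exprS mulN1r mulNr.
rewrite sumrN; set T := \sum_(_ <= _ < _) _ in T_ge0 T_le *.
by split; [apply/andP; split | move=> _]; lra.
Qed.

Lemma term_ratio_ineq (Q E X Y W z1 z2 : R) :
  3 <= Q -> Q <= E -> 1 <= X -> Q <= Y -> Q <= W -> 1 <= z1 -> 1 <= z2 ->
  X * Y <= Q * (Q * z1 * z2) ->
  (X - 1) * (Y - 1) * (E - 1) <= E * (Q * z1 - 1) * (Q * z2 - 1) * (W - 1).
Proof.
move=> Q3 QE X1 QY QW z1_ge1 z2_ge1 XY.
have z12 : 1 <= z1 * z2 by rewrite -[1]mul1r ler_pM.
have prod_split : (Q - 1) * (Q * z1 * z2 - 1) <= (Q * z1 - 1) * (Q * z2 - 1).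
  have : 0 <= Q * ((z1 - 1) * (z2 - 1)) by rewrite !mulr_ge0 // ?subr_ge0 //; lra.
  lra.
have XY_sub : (X - 1) * (Y - 1) <= Q * (Q * z1 * z2) - Q.
  have : 0 <= (X - 1) * (Y - Q) by rewrite mulr_ge0 // subr_ge0.
  lra.
have Qz_ge3 : 3 <= Q * z1 * z2.
  by rewrite -mulrA -[3]mulr1 ler_pM //; lra.
have XY_le : (X - 1) * (Y - 1) <= (W - 1) * ((Q * z1 - 1) * (Q * z2 - 1)).
  have : Q * (Q * z1 * z2 - 1) <= (Q - 1) * (Q - 1) * (Q * z1 * z2 - 1).
    by apply: ler_wpM2r; nra.
  have : (Q - 1) * (Q - 1) * (Q * z1 * z2 - 1) <= (W - 1) * ((Q * z1 - 1) * (Q * z2 - 1)).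
    by rewrite -mulrA ler_pM //; nra.
  lra.
have XY_ge0 : 0 <= (X - 1) * (Y - 1) by rewrite mulr_ge0 // subr_ge0; lra.
have -> : E * (Q * z1 - 1) * (Q * z2 - 1) * (W - 1) =
  (W - 1) * ((Q * z1 - 1) * (Q * z2 - 1)) * E by ring.
by rewrite ler_pM //; lra.
Qed.

(* Clearing the
   denominators reduces this to term_ratio_ineq. *)
Lemma term_step_le (X Y W z1 z2 Q P Qu E a b c A' B C' : R) :
  3 <= Q -> 0 < P -> 1 <= Qu -> Q <= E -> 0 < a -> 0 < b -> 0 < c ->
  1 <= X -> Q <= Y -> Q <= W -> 1 <= z1 -> 1 <= z2 ->
  X * Y <= Q * (Q * z1 * z2) ->
  A' * (Y - 1) = a * (Q * z1 - 1) ->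
  B * (W - 1) = b * (X - 1) ->
  C' * (E - 1) = c * (Q * z2 - 1) ->
  P * Qu * a * B * c <= P * (Qu * E) * A' * b * C'.
Proof.
move=> Q3 P_gt0 Qu_ge1 QE a_gt0 b_gt0 c_gt0 X1 QY QW z1_ge1 z2_ge1 XY eA eB eC.
have D_gt0 : 0 < (Y - 1) * (W - 1) * (E - 1) by rewrite !mulr_gt0 // subr_gt0; lra.
have K_gt0 : 0 < P * Qu * a * b * c by rewrite !mulr_gt0 //; lra.
rewrite -(ler_pM2r D_gt0).
have -> : P * Qu * a * B * c * ((Y - 1) * (W - 1) * (E - 1)) =
    (P * Qu * a * b * c) * ((X - 1) * (Y - 1) * (E - 1)).
  by transitivity (P * Qu * a * c * (Y - 1) * (E - 1) * (B * (W - 1))); [ring | rewrite eB; ring].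
have -> : P * (Qu * E) * A' * b * C' * ((Y - 1) * (W - 1) * (E - 1)) =
    (P * Qu * a * b * c) * (E * (Q * z1 - 1) * (Q * z2 - 1) * (W - 1)).
  transitivity (P * Qu * E * b * (W - 1) * (A' * (Y - 1)) * (C' * (E - 1))); first ring.
  by rewrite eA eC; ring.
by rewrite ler_pM2l //; apply: term_ratio_ineq.
Qed.

Lemma lead_gap_low_ineq (Q al io F M : R) :
  3 <= Q -> Q <= al -> 1 <= io -> 1 < F -> io * F <= M ->
  (io - 1) * (F - 1) * (F * Q - 1) < (M - 1) * (F * ((Q - 1) * (al * Q - 1))).
Proof.
move=> Q3 Qal io1 F1 ioFM.
have F_le : F <= io * F by rewrite ler_peMl //; lra.
have M1 : 1 < M by lra.
have ioF : (io - 1) * (F - 1) <= M - 1 by nra.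
have alQ : 2 * Q <= al * Q - 1.
  have : Q * Q <= al * Q by rewrite ler_wpM2r //; lra.
  nra.
have QalQ : 2 * (2 * Q) <= (Q - 1) * (al * Q - 1) by rewrite ler_pM //; lra.
have FQ : F * Q - 1 < F * ((Q - 1) * (al * Q - 1)).
  have : F * Q < F * ((Q - 1) * (al * Q - 1)) by rewrite ltr_pM2l //; lra.
  lra.
apply: (le_lt_trans (y := (M - 1) * (F * Q - 1))).
  by rewrite ler_wpM2r //; nra.
by rewrite ltr_pM2l // subr_gt0.
Qed.

Lemma lead_gap_high_ineq (Q A B C MK : R) :
  3 <= Q -> 1 <= A -> Q <= B -> 1 <= C -> C * B <= MK ->
  (B - 1) * (Q - 1) * (C * A * Q - 1) + (B - 1) * (C - 1) * (A * B * Q - 1)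
    < B * (MK - 1) * (A * Q - 1) * (Q - 1).
Proof.
move=> Q3 A1 QB C1 CM.
set U := A * Q - 1.
have U2 : 2 <= U by rewrite /U; nra.
have -> : C * A * Q - 1 = C * U + (C - 1) by rewrite /U; ring.
have -> : A * B * Q - 1 = B * U + B - 1 by rewrite /U; ring.
have hM : B * (C * B - 1) * U * (Q - 1) <= B * (MK - 1) * U * (Q - 1).
  by rewrite !ler_wpM2r ?ler_wpM2l //; lra.
have k1 : 0 <= (Q - 1) * U * (B - 1) - (B * U + B - 1).
  have t1 : 0 <= (Q - 3) * (U * (B - 1)) by rewrite !mulr_ge0 //; lra.
  have t2 : 1 <= (U - 1) * (B - 2) by rewrite -[1]mul1r ler_pM //; lra.
  have -> : (Q - 1) * U * (B - 1) - (B * U + B - 1) =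
    (Q - 3) * (U * (B - 1)) + ((U - 1) * (B - 2) - 1) by ring.
  lra.
have k2 : 0 <= (C - 1) * (Q - 1) * (U * B - B + 1).
  have UB : 0 <= (U - 1) * B by rewrite mulr_ge0 //; lra.
  by rewrite !mulr_ge0 //; lra.
have k3 : 0 <= C * ((Q - 1) * U * (B - 1) - (B * U + B - 1)) by rewrite mulr_ge0 //; lra.
have k4 : 0 < (B - 1) * (C * ((Q - 1) * U * (B - 1) - (B * U + B - 1)) + (B * U + B - 1)).
  have BU : 0 <= B * U by rewrite mulr_ge0 //; lra.
  by apply: mulr_gt0; lra.
have iden : B * (C * B - 1) * U * (Q - 1) - (B - 1) * (Q - 1) * (C * U + (C - 1))
      - (B - 1) * (C - 1) * (B * U + B - 1)
   = (B - 1) * (C * ((Q - 1) * U * (B - 1) - (B * U + B - 1)) + (B * U + B - 1))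
     + (C - 1) * (Q - 1) * (U * B - B + 1) by ring.
lra.
Qed.

(* Gap between the leading terms when i + j < d: with the recurrences
   relating X, X1, X2 and Y, GN, the leading term P E X1 GN of G_j(i)
   exceeds the leading term P E X GN of G_j(i+1) plus the term
   P (io - 1)/(Q - 1) X2 Y just below the leading one in G_j(i). *)
Lemma lead_gap_low_alg (Q P E al io M X X1 X2 GN Y : R) :
  3 <= Q -> 0 < P -> Q <= E -> Q <= al -> 1 <= io -> io * (E * al) <= M ->
  0 < X -> 0 < Y ->
  X1 * (al - 1) = X * (E * al - 1) -> X2 * (al * Q - 1) = X1 * (E * al * Q - 1) ->
  GN * (E - 1) = Y * (M - 1) ->
  P * E * X * GN + P * ((io - 1) / (Q - 1)) * X2 * Y < P * E * X1 * GN.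
Proof.
move=> Q3 P_gt0 QE Qal io1 ioM X_gt0 Y_gt0 eX1 eX2 eGN.
have al1 : 0 < al - 1 by lra.
have E1 : 0 < E - 1 by lra.
have alQ1 : 0 < al * Q - 1 by nra.
have -> : X2 = X1 * (E * al * Q - 1) / (al * Q - 1) by rewrite -eX2 mulfK // gt_eqF.
have -> : X1 = X * (E * al - 1) / (al - 1) by rewrite -eX1 mulfK // gt_eqF.
have -> : GN = Y * (M - 1) / (E - 1) by rewrite -eGN mulfK // gt_eqF.
rewrite -subr_gt0; set F := E * al in ioM *.
have F1 : 1 < F by rewrite /F; nra.
have -> : P * E * (X * (F - 1) / (al - 1)) * (Y * (M - 1) / (E - 1)) -
   (P * E * X * (Y * (M - 1) / (E - 1)) +
    P * ((io - 1) / (Q - 1)) * (X * (F - 1) / (al - 1) * (F * Q - 1) / (al * Q - 1)) * Y)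
   = (P * X * Y / ((al - 1) * (Q - 1) * (al * Q - 1))) *
     ((M - 1) * (F * ((Q - 1) * (al * Q - 1))) - (io - 1) * (F - 1) * (F * Q - 1)).
  by rewrite /F; field; lra.
rewrite mulr_gt0 ?subr_gt0 ?lead_gap_low_ineq //.
by rewrite divr_gt0 ?mulr_gt0 //; lra.
Qed.

(* Gap between the leading terms when i + j >= d, in the same spirit: the
   leading term P (A B) Z GNK of G_j(i) exceeds the leading term P A Gi1 Y of
   G_j(i+1) plus the (generalized) term just below the leading one in G_j(i). *)
Lemma lead_gap_high_alg (Q P A B C MK Z Y GNK Gi1 : R) :
  3 <= Q -> 0 < P -> 1 <= A -> Q <= B -> 1 <= C -> C * B <= MK -> 0 < Z -> 0 < Y ->
  Gi1 * (A * Q - 1) = Z * (C * A * Q - 1) -> GNK * (B - 1) = Y * (MK - 1) ->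
  P * A * Gi1 * Y + P * A * (Z * (C - 1) / (A * Q - 1)) * ((A * B * Q - 1) / (Q - 1)) * Y
    < P * (A * B) * Z * GNK.
Proof.
move=> Q3 P_gt0 A1 QB C1 CM Z_gt0 Y_gt0 eGi1 eGNK.
have B1 : 0 < B - 1 by lra.
have AQ1 : 0 < A * Q - 1 by nra.
have -> : Gi1 = Z * (C * A * Q - 1) / (A * Q - 1) by rewrite -eGi1 mulfK // gt_eqF.
have -> : GNK = Y * (MK - 1) / (B - 1) by rewrite -eGNK mulfK // gt_eqF.
rewrite -subr_gt0.
have -> : P * (A * B) * Z * (Y * (MK - 1) / (B - 1)) -
  (P * A * (Z * (C * A * Q - 1) / (A * Q - 1)) * Y +
   P * A * (Z * (C - 1) / (A * Q - 1)) * ((A * B * Q - 1) / (Q - 1)) * Y)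
  = (P * A * Z * Y / ((B - 1) * (A * Q - 1) * (Q - 1))) *
    (B * (MK - 1) * (A * Q - 1) * (Q - 1) - ((B - 1) * (Q - 1) * (C * A * Q - 1)
      + (B - 1) * (C - 1) * (A * B * Q - 1))).
  by field; lra.
rewrite mulr_gt0 ?subr_gt0 ?lead_gap_high_ineq //.
by rewrite divr_gt0 ?mulr_gt0 //; lra.
Qed.

End OrderedFieldFacts.

Section EigenvalueTerms.

Variables q n d : nat.
Hypothesis q_ge3 : (3 <= q)%N.
Hypothesis d_le_half : (2 * d <= n)%N.

Local Notation Q := (q%:R : rat).

Let q_gt1 : (1 < q)%N. Proof. exact: ltn_trans q_ge3. Qed.
Let Q_ge3 : 3 <= Q. Proof. by rewrite (_ : 3 = 3%:R :> rat) // ler_nat. Qed.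

Let Q_ge1 : 1 <= Q. Proof. by rewrite ler1n ltnW. Qed.
Let Q_gt0 : 0 < Q. Proof. exact: lt_le_trans ltr01 Q_ge1. Qed.

Lemma Qpow_ge1 k : 1 <= Q ^+ k.
Proof. exact: exprn_ege1. Qed.

Lemma Qpow_ge k : (0 < k)%N -> Q <= Q ^+ k.
Proof. by move=> k_gt0; rewrite -{1}(expr1 Q) ler_weXn2l. Qed.

Definition term (j I h : nat) : rat :=
  Q ^+ (j * (j + h - I) + 'C(I - h, 2))
    * gauss q I h * gauss q (d - h) j * gauss q (n - d - I + h) (n - d - j).

Lemma G_alt j I :
  G q n d j I = \sum_((I - j)%N <= h < (minn I (d - j)).+1) (-1) ^+ (I - h) * term j I h.
Proof. by apply: eq_bigr => h _; rewrite /term !mulrA. Qed.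

Lemma term_ge0 j I h : 0 <= term j I h.
Proof. by rewrite !mulr_ge0 ?gauss_ge0 ?exprn_ge0 // ltnW. Qed.

Lemma term_mono j I h : (1 <= j)%N -> (I <= d)%N -> (h < I)%N -> (h.+1 <= d - j)%N ->
  (I - j <= h)%N -> term j I h <= term j I h.+1.
Proof.
move=> j_ge1 I_le hI hdj Ijh.
(* With u = I - h - 1 and v = j + h - I (so j = u + v + 1), the two terms
   share the power P = q^(j v + C(u, 2)); the recurrences relate the three
   pairs of Gaussian binomials, and term_step_le compares the products. *)
set N := (n - d)%N; set v := (j + h - I)%N; set u := (I - h.+1)%N.
set M := (n - d - I + h)%N; set P := Q ^+ (j * v + 'C(u, 2)).
have eA := gaussSl q q_gt1 I h.
have eB := gaussSm q q_gt1 (d - h.+1) j ltac:(lia).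
rewrite (_ : (d - h.+1).+1 = d - h)%N in eB; last lia.
have eC := gaussSm q q_gt1 M (N - j) ltac:(lia).
rewrite (_ : (M.+1 - (N - j) = v.+1)%N) in eC; last lia.
have -> : term j I h = P * Q ^+ u * gauss q I h * gauss q (d - h) j * gauss q M (N - j).
  rewrite /term -exprD (_ : (I - h = u.+1)%N); last lia.
  by rewrite binS bin1 addnA.
have -> : term j I h.+1 =
    P * (Q ^+ u * Q ^+ v.+1) * gauss q I h.+1 * gauss q (d - h.+1) j * gauss q M.+1 (N - j).
  rewrite /term -!exprD (addnS (n - d - I) h) -/M; congr (_ ^+ _ * _ * _ * _).
  rewrite (_ : (j + h.+1 - I = v.+1)%N); last lia.
  have ej : j = (u + v.+1)%N by rewrite /u /v; lia.
  by rewrite mulnS -/u; lia.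
apply: (@term_step_le _ (Q ^+ (d - h)) (Q ^+ h.+1) (Q ^+ (d - h - j)) (Q ^+ u) (Q ^+ M) Q)
  => //; rewrite ?Qpow_ge1 ?exprn_gt0 //.
- exact: Qpow_ge.
- by apply: gauss_gt0; lia.
- by apply: gauss_gt0; lia.
- by apply: gauss_gt0; lia.
- exact: Qpow_ge.
- by apply: Qpow_ge; lia.
- by rewrite -exprS -!exprD -exprS ler_weXn2l //; lia.
- by rewrite -exprS (_ : u.+1 = I - h)%N //; lia.
- by rewrite -exprS.
Qed.

(* Since the summands alternate in sign and grow in absolute value, |G_j(I)| is
   at most the last summand and, if there are at least two, at least the
   difference of the last two. *)
Lemma G_bounds j I : (1 <= j)%N -> (I <= d)%N ->
  let top := minn I (d - j) in
  [/\ `|G q n d j I| <= term j I top,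
      (I - j < top)%N -> term j I top - term j I top.-1 <= `|G q n d j I| &
      (I - j = top)%N -> `|G q n d j I| = term j I top].
Proof.
move=> j_ge1 I_le top; set lo := (I - j)%N; set m := (top - lo)%N.
have e_top : top = (lo + m)%N by rewrite /m /top /lo; lia.
have e_G : G q n d j I = (-1) ^+ (I - top) *
    \sum_(lo <= h < (lo + m).+1) (-1) ^+ (lo + m - h) * term j I h.
  rewrite G_alt mulr_sumr -e_top; apply: eq_big_nat => h /andP[_ h_top].
  by rewrite mulrA -exprD; congr (_ ^+ _ * _); lia.
have [/andP[T_ge0 T_le] T_ge] := alt_sum_bounds (term j I) lo m (term_ge0 j I lo)
  (fun h hh => term_mono j I h j_ge1 I_le ltac:(lia) ltac:(lia) ltac:(lia)).
rewrite e_G normrM normrX normrN1 expr1n mul1r ger0_norm // -e_top in T_le T_ge *.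
split=> // [lo_top | lo_top]; first by apply: T_ge; lia.
by rewrite lo_top big_nat1 subnn expr0 mul1r.
Qed.

(* When i + j < d the top summand of G_j(i) has index i; the summand below it
   (index i - 1), written so that it also makes sense (and vanishes) for i = 0. *)
Definition sublead_low (j i : nat) : rat :=
  Q ^+ (j * (j - 1)) * ((Q ^+ i - 1) / (Q - 1))
    * gauss q (d - i).+1 j * gauss q (n - d).-1 (n - d - j).

Lemma sublead_low0 j : sublead_low j 0 = 0.
Proof. by rewrite /sublead_low expr0 subrr mul0r mulr0 !mul0r. Qed.

Lemma sublead_low_eq j i : (1 <= j)%N -> (i.+2 + j <= d)%N ->
  term j i.+1 i = sublead_low j i.+1.
Proof.
move=> j_ge1 ij_le.
rewrite /term /sublead_low gauss_Sn // (_ : (j + i - i.+1 = j - 1)%N); last lia.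
rewrite subSn // subnn addn0 (_ : (d - i = (d - i.+1).+1)%N); last lia.
by rewrite (_ : (n - d - i.+1 + i = (n - d).-1)%N); last lia.
Qed.

Lemma term_diag j I : (1 <= j)%N -> (I + j <= d)%N ->
  term j I I = Q ^+ (j * (j - 1)) * Q ^+ j * gauss q (d - I) j * gauss q (n - d) (n - d - j).
Proof.
move=> j_ge1 Ij_le.
rewrite /term subnn addnK gauss_nn // mulr1 subnK; last lia.
by rewrite -exprD bin0n addn0 -{2}(subnK j_ge1) mulnDr muln1.
Qed.

Lemma lead_gap_low j i : (1 <= j)%N -> (i.+1 + j <= d)%N ->
  term j i.+1 i.+1 + sublead_low j i < term j i i.
Proof.
move=> j_ge1 ij_le; set N := (n - d)%N.
rewrite !term_diag //; last lia.
have eX1 := gaussSm q q_gt1 (d - i.+1) j ltac:(lia).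
rewrite (_ : (d - i.+1).+1 = d - i)%N in eX1; last lia.
have eX2 := gaussSm q q_gt1 (d - i) j ltac:(lia).
rewrite (_ : ((d - i).+1 - j = (d - i - j).+1)%N) in eX2; last lia.
have eGN := gaussSm q q_gt1 N.-1 (N - j) ltac:(lia).
rewrite (_ : N.-1.+1 = N)%N in eGN; last lia.
rewrite (_ : (N - (N - j) = j)%N) in eGN; last lia.
have e_di : Q ^+ j * Q ^+ (d - i - j) = Q ^+ (d - i) by rewrite -exprD subnKC //; lia.
apply: (@lead_gap_low_alg _ Q (Q ^+ (j * (j - 1))) (Q ^+ j) (Q ^+ (d - i - j)) (Q ^+ i)
  (Q ^+ N) (gauss q (d - i.+1) j) (gauss q (d - i) j) (gauss q (d - i).+1 j)
  (gauss q N (N - j)) (gauss q N.-1 (N - j))) => //.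
- exact: exprn_gt0.
- exact: Qpow_ge.
- by apply: Qpow_ge; lia.
- exact: Qpow_ge1.
- by rewrite -!exprD ler_weXn2l //; lia.
- by apply: gauss_gt0; lia.
- by apply: gauss_gt0; lia.
- by rewrite e_di.
- by rewrite e_di -!exprSr.
Qed.

(* When i + j >= d the top summand of G_j(i) has index d - j; the summand below
   it (index d - j - 1, with K = i - (d - j)), written so that it also makes
   sense (and vanishes) for j = d. *)
Definition sublead_high (j i : nat) : rat :=
  let K := (i - (d - j))%N in
  Q ^+ (j * (j - K - 1) + 'C(K, 2) + K)
    * (gauss q i (d - j) * (Q ^+ (d - j) - 1) / (Q ^+ K.+1 - 1))
    * ((Q ^+ j.+1 - 1) / (Q - 1)) * gauss q (n - d - K).-1 (n - d - j).

Lemma sublead_high_dd i : sublead_high d i = 0.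
Proof. by rewrite /sublead_high subnn expr0 subrr mulr0 mul0r mulr0 !mul0r. Qed.

Lemma sublead_high_eq j i : (j < d)%N -> (d - j <= i)%N -> (i < d)%N ->
  term j i (d - j).-1 = sublead_high j i.
Proof.
move=> j_lt ci i_lt; rewrite /sublead_high.
set N := (n - d)%N; set c := (d - j)%N; set K := (i - c)%N.
have c_gt0 : (0 < c)%N by rewrite /c subn_gt0.
have eZ := gaussSl q q_gt1 i c.-1.
rewrite prednK // (_ : (i - c.-1 = K.+1)%N) in eZ; last lia.
rewrite /term (_ : (j + c.-1 - i = j - K - 1)%N); last lia.
rewrite (_ : (i - c.-1 = K.+1)%N); last lia.
rewrite (_ : (d - c.-1 = j.+1)%N); last lia.
rewrite (_ : (n - d - i + c.-1 = (N - K).-1)%N); last lia.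
by rewrite binS bin1 gauss_Sn // eZ mulfK ?Qpow_sub1_neq0 // addnA.
Qed.

Lemma lead_gap_high j i : (j <= d)%N -> (d - j <= i)%N -> (i < d)%N ->
  term j i.+1 (d - j) + sublead_high j i < term j i (d - j).
Proof.
move=> j_le ci i_lt; rewrite /sublead_high.
set N := (n - d)%N; set c := (d - j)%N; set K := (i - c)%N.
set P := Q ^+ (j * (j - K - 1) + 'C(K, 2)).
have eGi1 := gaussSm q q_gt1 i c ci.
rewrite (_ : (i.+1 - c = K.+1)%N) in eGi1; last lia.
have eGNK := gaussSm q q_gt1 (N - K).-1 (N - j) ltac:(lia).
rewrite (_ : (N - K).-1.+1 = N - K)%N in eGNK; last lia.
rewrite (_ : (N - K - (N - j) = j - K)%N) in eGNK; last lia.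
have e_j : Q ^+ K * Q ^+ (j - K) = Q ^+ j by rewrite -exprD subnKC //; lia.
have -> : term j i c = P * (Q ^+ K * Q ^+ (j - K)) * gauss q i c * gauss q (N - K) (N - j).
  rewrite /term -/K (_ : (j + c - i = j - K)%N); last lia.
  rewrite (_ : (d - c = j)%N); last lia.
  rewrite gauss_nn // mulr1 (_ : (n - d - i + c = N - K)%N); last lia.
  rewrite e_j -exprD; congr (_ ^+ _ * _ * _).
  have hK : (j * (j - K) = j * (j - K - 1) + j)%N.
    by rewrite -mulnSr subn1 prednK // subn_gt0; lia.
  by rewrite hK; lia.
have -> : term j i.+1 c = P * Q ^+ K * gauss q i.+1 c * gauss q (N - K).-1 (N - j).
  rewrite /term (_ : (i.+1 - c = K.+1)%N); last lia.
  rewrite (_ : (j + c - i.+1 = j - K - 1)%N); last lia.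
  rewrite (_ : (d - c = j)%N); last lia.
  rewrite gauss_nn // mulr1 (_ : (n - d - i.+1 + c = (N - K).-1)%N); last lia.
  by rewrite -!exprD binS bin1 addnA.
rewrite exprD -/P !exprSr -e_j.
apply: (@lead_gap_high_alg _ Q P (Q ^+ K) (Q ^+ (j - K)) (Q ^+ c) (Q ^+ (N - K))
  (gauss q i c) (gauss q (N - K).-1 (N - j)) (gauss q (N - K) (N - j)) (gauss q i.+1 c)) => //.
- exact: exprn_gt0.
- exact: Qpow_ge1.
- by apply: Qpow_ge; lia.
- exact: Qpow_ge1.
- by rewrite -exprD ler_weXn2l //; lia.
- by apply: gauss_gt0; lia.
- by apply: gauss_gt0; lia.
- by rewrite -(exprD Q c K) subnKC // -!exprSr.
Qed.

(* Combining the lower bound of G_bounds with the leading gaps: the top summand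
   of G_j(i+1) is strictly smaller than |G_j(i)|, in both regimes. *)
Lemma top_term_lt_low j i : (1 <= j)%N -> (i.+1 + j <= d)%N ->
  term j i.+1 i.+1 < `|G q n d j i|.
Proof.
move=> j_ge1 low; have := lead_gap_low j i j_ge1 low.
have [_ G_ge G_eq] := G_bounds j i j_ge1 (ltnW (leq_trans (leq_addr j i.+1) low)).
rewrite (_ : minn i (d - j) = i) in G_ge G_eq; last lia.
case: i low G_ge G_eq => [|i] low G_ge G_eq.
  by rewrite sublead_low0 addr0 G_eq.
by have := G_ge ltac:(lia); rewrite sublead_low_eq //=; lra.
Qed.

Lemma top_term_lt_high j i : (j <= d)%N -> (d - j <= i)%N -> (i < d)%N ->
  term j i.+1 (d - j) < `|G q n d j i|.
Proof.
move=> j_le high i_lt; have := lead_gap_high j i j_le high i_lt.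
have j_ge1 : (1 <= j)%N by lia.
have [_ G_ge G_eq] := G_bounds j i j_ge1 (ltnW i_lt).
rewrite (_ : minn i (d - j) = d - j)%N in G_ge G_eq; last lia.
have [j_lt | d_le_j] := ltnP j d.
  by have := G_ge ltac:(lia); rewrite sublead_high_eq //; lra.
have j_d : j = d by apply/eqP; rewrite eqn_leq j_le.
move: G_eq; rewrite j_d sublead_high_dd addr0 => G_eq gap.
by rewrite G_eq; [exact: gap | lia].
Qed.

End EigenvalueTerms.

Theorem theorem3p4 (q n d : nat) :
  (exists p k : nat, [/\ prime p, (0 < k)%N & q = (p ^ k)%N]) ->
  (3 <= q)%N -> (1 <= d)%N -> (2 * d <= n)%N ->
  forall i j : nat, (i <= d - 1)%N -> (1 <= j <= d)%N ->
  `|G q n d j i.+1| < `|G q n d j i|.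
Proof.
move=> _ q_ge3 d_ge1 d_le_half i j i_le /andP[j_ge1 j_le].
have i_lt : (i < d)%N by lia.
have [G_le _ _] := G_bounds q n d q_ge3 d_le_half j i.+1 j_ge1 i_lt.
apply: le_lt_trans G_le _.
have [low | high] := leqP (i.+1 + j) d.
  rewrite (_ : minn i.+1 (d - j) = i.+1); last lia.
  exact: top_term_lt_low.
rewrite (_ : minn i.+1 (d - j) = d - j)%N; last lia.
by apply: top_term_lt_high => //; lia.
Qed.
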